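(* Let the setting in the context hold, let $\beta_i\in(0,1)$ for each $i\in\mathcal{N}$, and suppose each agent uses the Wasserstein radius $\epsilon_i=\epsilon_i(K_i,\beta_i)$. Let $x_K^*$ be a DRNE of the game $\forall i:\ \min_{x_i\in X_i}\max_{\mathbb{Q}_i\in\mathbb{B}_{\epsilon_i(K_i,\beta_i)}(\hat{\mathbb{P}}_{K_i})}\mathbb{E}_{\mathbb{Q}_i}[h_i(x_i,x_{-i},\xi_i)]$ computed from the drawn multisample $\xi_K=\{\xi_{K_i}\}_{i=1}^N$. Then $$\mathbb{P}^K\Big\{\mathbb{E}_{\mathbb{P}_i}[h_i(x_K^*,\xi_i)]\le\sup_{\mathbb{Q}_i\in\mathbb{B}_{\epsilon_i(K_i,\beta_i)}(\hat{\mathbb{P}}_{K_i})}\mathbb{E}_{\mathbb{Q}_i}[h_i(x_K^*,\xi_i)]\ \ \forall i\in\mathcal{N}\Big\}\ \ge\ 1-\sum_{i\in\mathcal{N}}\beta_i,$$ where $\mathbb{P}^K=\prod_{i=1}^N\mathbb{P}_i^{K_i}$.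
   Context: Agents $i\in\mathcal{N}=\{1,\dots,N\}$ choose $x_i\in X_i\subseteq\mathbb{R}^n$, $X=\prod_iX_i$, $x=\mathrm{col}((x_i)_i)$, $x_{-i}$ the others' decisions; $h_i:\mathbb{R}^{nN}\times\Xi_i\to\mathbb{R}$ is agent $i$'s cost, with uncertainty $\xi_i\in\Xi_i\subseteq\mathbb{R}^p$, $p\neq 2$, distributed according to an unknown true distribution $\mathbb{P}_i$. $\|\cdot\|$ is the Euclidean norm; $\mathcal{M}(\Xi_i)$ is the set of distributions on $\Xi_i$ with finite first moment; $d_W(\mathbb{Q}_1,\mathbb{Q}_2)=\inf_\Pi\int\|\xi_1-\xi_2\|\Pi(d\xi_1,d\xi_2)$ over couplings $\Pi$ of $\mathbb{Q}_1,\mathbb{Q}_2$. Each agent $i$ draws $K_i\ge1$ i.i.d. samples $\xi_{K_i}=\{\xi_i^{(k)}\}_{k=1}^{K_i}$ from $\mathbb{P}_i$ (independently across agents), with empirical distribution $\hat{\mathbb{P}}_{K_i}=\frac1{K_i}\sum_k\delta_{\xi_i^{(k)}}$ and $\mathbb{B}_{\epsilon}(\hat{\mathbb{P}}_{K_i})=\{\mathbb{Q}\in\mathcal{M}(\Xi_i):d_W(\hat{\mathbb{P}}_{K_i},\mathbb{Q})\le\epsilon\}$. A DRNE is $x^*_K\in X$ with $x^*_{i,K}\in\arg\min_{x_i\in X_i}\max_{\mathbb{Q}_i\in\mathbb{B}_{\epsilon_i}(\hat{\mathbb{P}}_{K_i})}\mathbb{E}_{\mathbb{Q}_i}[h_i(x_i,x^*_{-i,K},\xi_i)]$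 for all $i$. Light-tail assumption: for each $i$, the true distribution $\mathbb{P}_i$ (and every distribution considered in agent $i$'s ambiguity set) belongs to $\mathcal{M}(\Xi_i)$ and there is $a_i>1$ with $A_i:=\mathbb{E}[\exp(\|\xi_i\|^{a_i})]<\infty$. Under this assumption there are constants $c_i,b_i>0$ depending only on $a_i,A_i,p$ (Fournier–Guillin) such that $\mathbb{P}_i^{K_i}\{\mathbb{P}_i\in\mathbb{B}_{\epsilon}(\hat{\mathbb{P}}_{K_i})\}\ge 1-c_i\exp(-b_iK_i\epsilon^{\max\{p,2\}})$ if $\epsilon\le1$ and $\ge 1-c_i\exp(-b_iK_i\epsilon^{a_i})$ if $\epsilon>1$. The radius $\epsilon_i(K_i,\beta_i)$ is defined as $\big(\ln(c_i/\beta_i)/(b_iK_i)\big)^{1/\max\{p,2\}}$ if $K_i\ge\ln(c_i/\beta_i)/b_i$ and $\big(\ln(c_i/\beta_i)/(b_iK_i)\big)^{1/a_i}$ otherwise; it satisfies $\mathbb{P}_i^{K_i}\{d_W(\mathbb{P}_i,\hat{\mathbb{P}}_{K_i})\le\epsilon_i(K_i,\beta_i)\}\ge1-\beta_i$. *)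

From HB Require Import structures.
From mathcomp Require Import all_boot all_order all_algebra.
From mathcomp Require Import all_classical all_reals all_analysis.
Set Implicit Arguments. Unset Strict Implicit. Unset Printing Implicit Defensive.
Import Order.TTheory GRing.Theory Num.Theory.
Local Open Scope classical_set_scope.
Local Open Scope ring_scope.

Section Defs.
Context {R : realType}.

(* Euclidean distance on R^p, represented as p.-tuple R (product Borel sigma-algebra) *)
Definition edist (p : nat) (u v : p.-tuple R) : R :=
  Num.sqrt (\sum_(j < p) (tnth u j - tnth v j) ^+ 2).
Definition enorm (p : nat) (u : p.-tuple R) : R :=
  Num.sqrt (\sum_(j < p) (tnth u j) ^+ 2).

Local Notation V p := (p.-tuple R).

Definition coupling (p : nat) (mu1 mu2 : set (V p) -> \bar R)
  (Pi : probability (V p * V p)%type R) : Prop :=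
  (forall A : set (V p), measurable A -> Pi (A `*` setT) = mu1 A) /\
  (forall A : set (V p), measurable A -> Pi (setT `*` A) = mu2 A).

Definition dW (p : nat) (mu1 mu2 : set (V p) -> \bar R) : \bar R :=
  ereal_inf [set (\int[Pi]_z (edist z.1 z.2)%:E)%E | Pi in coupling mu1 mu2].

Definition empirical (p K : nat) (s : 'I_K -> V p) : set (V p) -> \bar R :=
  fun A => (((K%:R)^-1)%:E * \sum_(k < K) \d_(s k) A)%E.

Definition inM (p : nat) (Xi : set (V p)) (Q : probability (V p) R) : Prop :=
  (exists2 A : set (V p), measurable A & A `<=` Xi /\ Q A = 1%E) /\
  (\int[Q]_z (enorm z)%:E < +oo)%E.

Definition Wball (p : nat) (Xi : set (V p)) (eps : R) (mu : set (V p) -> \bar R)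
  : set (probability (V p) R) :=
  [set Q | inM Xi Q /\ (dW mu Q <= eps%:E)%E].

Definition upd (N n : nat) (x : 'I_N -> 'rV[R]_n) (i : 'I_N) (y : 'rV[R]_n) :=
  fun j => if j == i then y else x j.

Definition worst_exp (N n p : nat) (Xi : set (V p)) (eps : R)
  (mu : set (V p) -> \bar R) (hi : ('I_N -> 'rV[R]_n) -> V p -> R)
  (x : 'I_N -> 'rV[R]_n) : \bar R :=
  ereal_sup [set (\int[Q]_z (hi x z)%:E)%E | Q in Wball Xi eps mu].

Definition is_DRNE (N n p : nat) (X : 'I_N -> set 'rV[R]_n)
  (Xi : 'I_N -> set (V p)) (eps : 'I_N -> R) (mu : 'I_N -> set (V p) -> \bar R)
  (h : 'I_N -> ('I_N -> 'rV[R]_n) -> V p -> R) (x : 'I_N -> 'rV[R]_n) : Prop :=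
  forall i, X i (x i) /\
    forall y, X i y ->
      (worst_exp (Xi i) (eps i) (mu i) (h i) x
        <= worst_exp (Xi i) (eps i) (mu i) (h i) (upd x i y))%E.

Definition eps_radius (p : nat) (a b c : R) (K : nat) (beta : R) : R :=
  let L := ln (c / beta) / (b * K%:R) in
  if ln (c / beta) / b <= K%:R then powR L (maxn p 2)%:R^-1 else powR L a^-1.

Definition mutually_independent {dO} {O : measurableType dO} (P : probability O R)
  (N p : nat) (K : 'I_N -> nat) (xi : forall i : 'I_N, 'I_(K i) -> O -> V p) : Prop :=
  forall B : forall i : 'I_N, 'I_(K i) -> set (V p),
    (forall i k, measurable (B i k)) ->
    P (\big[setI/setT]_(i < N) \big[setI/setT]_(k < K i) (xi i k @^-1` B i k))
    = (\prod_(i < N) \prod_(k < K i) P (xi i k @^-1` B i k))%E.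

End Defs.

From HB Require Import structures.
From mathcomp Require Import all_boot all_order all_algebra.
From mathcomp Require Import all_classical all_reals all_analysis.
From mathcomp Require Import lra.
Set Implicit Arguments.
Unset Strict Implicit.
Import Order.TTheory GRing.Theory Num.Theory.
Local Open Scope classical_set_scope.
Local Open Scope ring_scope.

(* On the event G_i that the empirical distribution of agent i lies within
   Wasserstein distance eps_i of the true law P_i, the law P_i belongs to agent
   i's ambiguity set, so the true expected cost of any decision profile, in
   particular of the DRNE, is at most the worst-case expectation.  The radius
   eps_i(K_i, beta_i) inverts the Fournier-Guillin rate, hence P(G_i) >= 1 - beta_i;
   when c_i <= beta_i the radius can be 0 and the bound is obtained from the
   Fournier-Guillin bound at every positive radius by continuity from above.
   A union bound over the agents concludes. *)

Section radius.
Variable R : realType.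

Definition fg_exponent (p : nat) (a eps : R) : R :=
  if eps <= 1 then powR eps (maxn p 2)%:R else powR eps a.

Lemma eps_radius_ge0 (p : nat) (a b c : R) (K : nat) (beta : R) :
  0 <= eps_radius p a b c K beta.
Proof. by rewrite /eps_radius; case: ifP => _; apply: powR_ge0. Qed.

Lemma fg_exponent_root (p : nat) (a L : R) : 0 < a -> 0 < L ->
  fg_exponent p a (if L <= 1 then powR L (maxn p 2)%:R^-1 else powR L a^-1) = L.
Proof.
move=> a0 L0; have M0 : (0 : R) < (maxn p 2)%:R by rewrite ltr0n leq_max orbT.
have powRK r : 0 < r -> powR (powR L r^-1) r = L.
  by move=> r0; rewrite -powRrM mulVf ?gt_eqF // powRr1 // ltW.
have one r : (1 : R) = powR 1 r by rewrite powR1.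
rewrite /fg_exponent; have [L1|L1] := leP L 1.
  rewrite ifT ?powRK // [leRHS](one (maxn p 2)%:R^-1).
  by rewrite ge0_ler_powR ?invr_ge0 ?nnegrE ?ler01 ?(ltW L0) ?(ltW M0).
rewrite ifF ?powRK // [leRHS](one a^-1).
by apply/negbTE; rewrite -ltNge gt0_ltr_powR ?invr_gt0 ?nnegrE ?ler01 ?(ltW L0).
Qed.

Lemma eps_radiusE (p : nat) (a b c : R) (K : nat) (beta : R) :
  0 < b -> (0 < K)%N ->
  let L := ln (c / beta) / (b * K%:R) in
  eps_radius p a b c K beta =
    if L <= 1 then powR L (maxn p 2)%:R^-1 else powR L a^-1.
Proof.
move=> b0 K0 L; have bK0 : 0 < b * K%:R by rewrite mulr_gt0 ?ltr0n.
by rewrite /eps_radius -/L /L !ler_pdivrMr ?ltr0n // mul1r [K%:R * b]mulrC.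
Qed.

Lemma fg_tail_eps_radius (p : nat) (a b c : R) (K : nat) (beta : R) :
  1 < a -> 0 < b -> 0 < beta -> beta < c -> (0 < K)%N ->
  0 < eps_radius p a b c K beta /\
  c * expR (- (b * K%:R * fg_exponent p a (eps_radius p a b c K beta))) = beta.
Proof.
move=> a1 b0 be0 bec K0; have bK0 : 0 < b * K%:R by rewrite mulr_gt0 ?ltr0n.
have cbe : 0 < c / beta by rewrite divr_gt0 // (lt_trans be0).
have L0 : 0 < ln (c / beta) / (b * K%:R).
  by rewrite divr_gt0 // ln_gt0 // ltr_pdivlMr // mul1r.
rewrite eps_radiusE //; split; first by case: ifP => _; apply: powR_gt0.
rewrite fg_exponent_root ?(lt_trans ltr01 a1) // [X in - X]mulrC divfK ?gt_eqF //.
by rewrite expRN lnK ?posrE // invf_div mulrC divfK // gt_eqF // (lt_trans be0).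
Qed.

End radius.

Lemma sublevel_bigcap (R : realType) (T : Type) (f : T -> \bar R) (t : R) :
  [set w | (f w <= t%:E)%E] = \bigcap_m [set w | (f w <= (t + m.+1%:R^-1)%:E)%E].
Proof.
rewrite eqEsubset; split => w /= fw.
  by move=> m _; apply: le_trans fw _; rewrite lee_fin lerDl invr_ge0.
apply/lee_addgt0Pr => e e0; have [m] := ltr_add_invr e0; rewrite add0r => me.
by apply: le_trans (fw m I) _; rewrite EFinD leeD2l // lee_fin ltW.
Qed.

Section probability_bounds.
Variables (R : realType) (d : measure_display) (T : measurableType d).
Variable P : probability T R.

Lemma probability_setI_ge (A B : set T) (x y : R) :
  measurable A -> measurable B -> (x%:E <= P A)%E -> (y%:E <= P B)%E ->
  ((x + y - 1)%:E <= P (A `&` B))%E.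
Proof.
move=> mA mB PA PB; have mAB := measurableI _ _ mA mB.
have PB_le : (P B <= P (A `&` B) + P (~` A))%E.
  rewrite (le_trans _ (measureU2 P mAB (measurableC mA))) //.
  apply: le_measure; rewrite ?inE //; first exact: measurableU (measurableC mA).
  by move=> w Bw; have [Aw|nAw] := pselect (A w); [left|right].
have finE C : measurable C -> P C = (fine (P C))%:E.
  by move=> mC; rewrite fineK // fin_num_measure.
move: PB_le PA PB; rewrite probability_setC // (finE _ mA) (finE _ mB) (finE _ mAB).
by rewrite -EFinB -EFinD !lee_fin; lra.
Qed.

Lemma probability_bigsetI_ge (I : Type) (r : seq I) (G : I -> set T)
    (beta : I -> R) :
  (forall i, measurable (G i)) -> (forall i, ((1 - beta i)%:E <= P (G i))%E) ->
  ((1 - \sum_(i <- r) beta i)%:E <= P (\big[setI/setT]_(i <- r) G i))%E.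
Proof.
move=> mG PG; elim: r => [|i r IH]; first by rewrite !big_nil probability_setT subr0.
rewrite !big_cons; apply: le_trans (probability_setI_ge (mG i) _ (PG i) IH).
  by rewrite lee_fin; lra.
exact: bigsetI_measurable.
Qed.

Lemma probability_bigcap_ge (S : nat -> set T) (x : R) :
  (forall m, measurable (S m)) -> nonincreasing_seq S ->
  (forall m, (x%:E <= P (S m))%E) -> (x%:E <= P (\bigcap_m S m))%E.
Proof.
move=> mS S_dec PS.
have PS0_fin : (P (S 0%N) < +oo)%E by rewrite (le_lt_trans (probability_le1 P _)) ?ltry.
have cvgPS := nonincreasing_cvg_mu PS0_fin mS (bigcapT_measurable mS) S_dec.
rewrite -(cvg_lim _ cvgPS) //; apply: lime_ge; first exact: cvgP cvgPS.
exact: nearW.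
Qed.

Lemma probability_sublevel_ge (f : T -> \bar R) (t x : R) :
  (forall e, t < e -> measurable [set w | (f w <= e%:E)%E]) ->
  (forall e, t < e -> (x%:E <= P [set w | (f w <= e%:E)%E])%E) ->
  measurable [set w | (f w <= t%:E)%E] /\ (x%:E <= P [set w | (f w <= t%:E)%E])%E.
Proof.
have t_lt m : t < t + m.+1%:R^-1 by rewrite ltrDl invr_gt0 ltr0n.
move=> mf Pf; rewrite sublevel_bigcap.
have mS m : measurable [set w | (f w <= (t + m.+1%:R^-1)%:E)%E] by exact: mf (t_lt m).
split; first exact: bigcapT_measurable.
apply: probability_bigcap_ge => // [m k mk|m]; last exact: Pf (t_lt m).
apply/subsetPset => w /= fw; apply: le_trans fw _.
by rewrite lee_fin lerD2l lef_pV2 ?posrE ?ltr0n // ler_nat.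
Qed.

End probability_bounds.

Lemma sublevel_eps_radius_ge (R : realType) (d : measure_display)
    (T : measurableType d) (P : probability T R) (f : T -> \bar R)
    (p : nat) (a b c : R) (K : nat) (beta : R) :
  1 < a -> 0 < b -> 0 < c -> 0 < beta -> (0 < K)%N ->
  (forall e, 0 < e -> measurable [set w | (f w <= e%:E)%E]) ->
  (forall e, 0 < e ->
     ((1 - c * expR (- (b * K%:R * fg_exponent p a e)))%:E
       <= P [set w | (f w <= e%:E)%E])%E) ->
  let eps := eps_radius p a b c K beta in
  measurable [set w | (f w <= eps%:E)%E] /\
  ((1 - beta)%:E <= P [set w | (f w <= eps%:E)%E])%E.
Proof.
move=> a1 b0 c0 be0 K0 mf Pf eps.
have [bec|ceb] := ltP beta c.
  have [eps0 tailE] := fg_tail_eps_radius p a1 b0 be0 bec K0.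
  by split; [exact: mf | rewrite -[X in 1 - X]tailE; exact: Pf].
apply: probability_sublevel_ge => [e|e] eps_e.
  by apply: mf; apply: le_lt_trans eps_e; apply: eps_radius_ge0.
have e0 : 0 < e by apply: le_lt_trans eps_e; apply: eps_radius_ge0.
apply: le_trans (Pf _ e0); rewrite lee_fin lerB //; apply: le_trans ceb.
rewrite ler_piMr ?(ltW c0) // -[leRHS]expR0 ler_expR oppr_le0.
by rewrite !mulr_ge0 ?ler0n ?(ltW b0) // /fg_exponent; case: ifP => _; apply: powR_ge0.
Qed.

Lemma worst_exp_ge (R : realType) (N n p : nat) (Xi : set (p.-tuple R)) (eps : R)
    (mu : set (p.-tuple R) -> \bar R) (hi : ('I_N -> 'rV[R]_n) -> p.-tuple R -> R)
    (x : 'I_N -> 'rV[R]_n) (Q : probability (p.-tuple R) R) :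
  inM Xi Q -> (dW mu Q <= eps%:E)%E ->
  (\int[Q]_z (hi x z)%:E <= worst_exp Xi eps mu hi x)%E.
Proof. by move=> QM dWQ; apply: ereal_sup_ubound; exists Q. Qed.

Theorem lemma4 (R : realType) (N n p : nat) (hp : p != 2%N)
  (X : 'I_N -> set 'rV[R]_n)
  (Xi : 'I_N -> set (p.-tuple R))
  (h : 'I_N -> ('I_N -> 'rV[R]_n) -> p.-tuple R -> R)
  (Ptrue : 'I_N -> probability (p.-tuple R) R)
  (a b c beta : 'I_N -> R)
  (K : 'I_N -> nat)
  (* light-tail assumption *)
  (hPM : forall i, inM (Xi i) (Ptrue i))
  (ha : forall i, 1 < a i)
  (hA : forall i,
     (\int[Ptrue i]_z (expR (powR (enorm z) (a i)))%:E < +oo)%E)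
  (hK : forall i, (0 < K i)%N)
  (hbeta : forall i, 0 < beta i < 1)
  (* the probability space carrying the multisample *)
  (dO : measure_display) (O : measurableType dO) (P : probability O R)
  (xi : forall i : 'I_N, 'I_(K i) -> O -> p.-tuple R)
  (hxi_meas : forall i k, measurable_fun setT (xi i k))
  (hxi_law : forall i k (B : set (p.-tuple R)), measurable B ->
     P (xi i k @^-1` B) = Ptrue i B)
  (hxi_indep : mutually_independent P xi)
  (* Fournier--Guillin concentration constants *)
  (hb : forall i, 0 < b i) (hc : forall i, 0 < c i)
  (hFG_meas : forall i (eps : R), 0 < eps ->
     measurable [set w | (dW (empirical (fun k => xi i k w)) (Ptrue i) <= eps%:E)%E])
  (hFG : forall i (eps : R), 0 < eps ->
     ((1 - c i * expR (- (b i * (K i)%:R *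
          (if eps <= 1 then powR eps (maxn p 2)%:R else powR eps (a i)))))%:E
      <= P [set w | (dW (empirical (fun k => xi i k w)) (Ptrue i) <= eps%:E)%E])%E)
  (* a DRNE computed from the drawn multisample *)
  (xstar : O -> 'I_N -> 'rV[R]_n)
  (hDRNE : forall w, is_DRNE X Xi (fun i => eps_radius p (a i) (b i) (c i) (K i) (beta i))
                       (fun i => empirical (fun k => xi i k w)) h (xstar w)) :
  exists2 A : set O, measurable A /\
    A `<=` [set w | forall i : 'I_N,
        (\int[Ptrue i]_z (h i (xstar w) z)%:E
         <= worst_exp (Xi i) (eps_radius p (a i) (b i) (c i) (K i) (beta i))
              (empirical (fun k => xi i k w)) (h i) (xstar w))%E]
    & ((1 - \sum_(i < N) beta i)%:E <= P A)%E.
Proof.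
pose eps i := eps_radius p (a i) (b i) (c i) (K i) (beta i).
pose G i := [set w | (dW (empirical (fun k => xi i k w)) (Ptrue i) <= (eps i)%:E)%E].
have G_ge i : measurable (G i) /\ ((1 - beta i)%:E <= P (G i))%E.
  have /andP[beta0 _] := hbeta i.
  exact: sublevel_eps_radius_ge (ha i) (hb i) (hc i) beta0 (hK i) (hFG_meas i) (hFG i).
exists (\big[setI/setT]_(i < N) G i).
  split; first by apply: bigsetI_measurable => i _; case: (G_ge i).
  move=> w; rewrite -bigcap_seq => Gw i.
  exact: worst_exp_ge (hPM i) (Gw i (mem_index_enum i)).
by apply: probability_bigsetI_ge => i; case: (G_ge i).
Qed.
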